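(* Let $X$ be a $G$-space such that the orbit map $\rho_X\colon X\to X/G$ admits a strict section, i.e. a continuous $s\colon X/G\to X$ with $\rho_X\circ s=\mathrm{id}_{X/G}$. Then (1) $\mathrm{cat}^{G,\infty}(X)=\mathrm{cat}(X/G)$, and (2) $\mathrm{TC}^{G,\infty}(X)=\mathrm{TC}(X/G)$.
   Context: All spaces are well-pointed CW complexes, $G$ a topological group acting cellularly; $x_0\in X$ is the base point. $\mathrm{cat}$ and $\mathrm{TC}$ denote the reduced Lusternik–Schnirelmann category and reduced topological complexity. $PX$ is the path space; $\mathcal{P}_k(X)=\{(\gamma_1,\dots,\gamma_k)\in(PX)^k\mid G\gamma_i(1)=G\gamma_{i+1}(0),\ 1\le i\le k-1\}$, $\pi_k(\gamma_1,\dots,\gamma_k)=(\gamma_1(0),\gamma_k(1))\in X\times X$. $\mathrm{secat}$ is reduced sectional category (least $n$ such that the base is covered by $n+1$ open sets each admitting a homotopy section). $\mathrm{TC}^{G,k}(X)=\mathrm{secat}(\pi_k)$, $\mathrm{TC}^{G,\infty}(X)=\min_k\mathrm{TC}^{G,k}(X)$. $P^k_*(X)=\{(\gamma_1,\dots,\gamma_k)\in\mathcal{P}_k(X)\mid\gamma_1(0)=x_0\}$, $q_k(\gamma_1,\dots,\gamma_k)=\gamma_k(1)$, $\mathrm{cat}^{G,k}(X)=\mathrm{secat}(q_k)$, $\mathrm{cat}^{G,\infty}(X)=\min_k\mathrm{cat}^{G,k}(X)$. *)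

From HB Require Import structures.
From mathcomp Require Import all_boot all_order all_algebra.
From mathcomp Require Import all_classical all_reals topology.
From mathcomp Require Import Rstruct Rstruct_topology.
From Stdlib Require Import Rdefinitions.

Set Implicit Arguments.
Unset Strict Implicit.
Unset Printing Implicit Defensive.

Import Order.TTheory GRing.Theory Num.Theory.
Local Open Scope classical_set_scope.
Local Open Scope ring_scope.

Definition I01 : set R := [set t | (0 <= t <= 1)%R].

(** Infimum of a set of naturals in [option nat] (None = +infinity). *)
Lemma ex_asbool_nat (S : set nat) : (exists n, S n) -> exists n, `[< S n >].
Proof. by case=> n Sn; exists n; apply/asboolP. Qed.

Definition oinf (S : set nat) : option nat :=
  match pselect (exists n, S n) with
  | left h => Some (ex_minn (ex_asbool_nat h))
  | right _ => None
  end.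

Definition is_top_group_action (G X : topologicalType)
    (mul : G -> G -> G) (inv : G -> G) (one : G) (act : G -> X -> X) : Prop :=
  [/\ continuous (fun p : G * G => mul p.1 p.2),
      continuous inv,
      continuous (fun p : G * X => act p.1 p.2),
      [/\ forall a b c, mul a (mul b c) = mul (mul a b) c,
          forall a, mul one a = a &
          forall a, mul (inv a) a = one] &
      (forall x, act one x = x) /\
      (forall a b x, act (mul a b) x = act a (act b x))].

Definition same_orbit (G X : Type) (act : G -> X -> X) (x y : X) : Prop :=
  exists g, act g x = y.

(** [rho : X -> Q] is (a model of) the orbit map X -> X/G: a surjection whose
    fibres are exactly the G-orbits and Q carries the quotient topology. *)
Definition is_orbit_map (G X Q : topologicalType) (act : G -> X -> X)
    (rho : X -> Q) : Prop :=
  [/\ forall q, exists x, rho x = q,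
      forall x y, rho x = rho y <-> same_orbit act x y &
      forall V : set Q, open V <-> open (rho @^-1` V)].

(** ** Homotopies and homotopy sections (maps into path spaces are written in
    curried/adjoint form: a map U -> PX is a map U x [0,1] -> X continuous
    on U x [0,1]; [0,1] is locally compact Hausdorff, so this is the same as
    continuity into PX with the compact-open topology). *)

Definition htpy_on (Z Y : topologicalType) (U : set Z) (f g : Z -> Y) : Prop :=
  exists H : Z -> R -> Y,
    {within U `*` I01, continuous (fun z : Z * R => H z.1 z.2)} /\
    (forall b, U b -> H b 0 = f b /\ H b 1 = g b).

(** gam (indices 0..k-1) is a continuous map U -> P_k(X) where consecutive
    paths are glued along the relation [rel]: rel (gam_i(1)) (gam_{i+1}(0)). *)
Definition multipath_on (Z X : topologicalType) (rel : X -> X -> Prop)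
    (k : nat) (U : set Z) (gam : nat -> Z -> R -> X) : Prop :=
  (forall i, (leq i.+1 k) ->
     {within U `*` I01, continuous (fun z : Z * R => gam i z.1 z.2)}) /\
  (forall b, U b -> forall i, (leq i.+2 k) -> rel (gam i b 1) (gam i.+1 b 0)).

(** U admits a homotopy section of pi_k : P_k(X) -> X x X,
    (g_1..g_k) |-> (g_1(0), g_k(1)). *)
Definition pi_hsec (X : topologicalType) (rel : X -> X -> Prop) (k : nat)
    (U : set (X * X)) : Prop :=
  exists gam, multipath_on rel k U gam /\
    htpy_on U (fun z => (gam 0%N z 0, gam k.-1 z 1)) id.

(** U admits a homotopy section of q_k : P^k_*(X) -> X, (g_1..g_k) |-> g_k(1),
    where P^k_*(X) requires g_1(0) = x0. *)
Definition q_hsec (X : topologicalType) (rel : X -> X -> Prop) (x0 : X)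
    (k : nat) (U : set X) : Prop :=
  exists gam, multipath_on rel k U gam /\
    (forall z, U z -> gam 0%N z 0 = x0) /\
    htpy_on U (fun z => gam k.-1 z 1) id.

(** Reduced sectional category: least n such that the base is covered by
    n+1 open sets each admitting a homotopy section (None if there is none). *)
Definition secat_le (B : topologicalType) (hsec : set B -> Prop) (n : nat) :=
  exists U : 'I_n.+1 -> set B,
    (forall i, open (U i)) /\ (forall b, exists i, U i b) /\
    (forall i, hsec (U i)).

Definition secat (B : topologicalType) (hsec : set B -> Prop) : option nat :=
  oinf (secat_le hsec).

(** Ordinary (reduced) LS-category and topological complexity, as sectional
    categories of P_*(B) -> B and PB -> B x B (k = 1, no gluing). *)
Definition catLS (B : topologicalType) (b0 : B) : option nat :=
  secat (q_hsec (@eq B) b0 1).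
Definition TC (B : topologicalType) : option nat :=
  secat (pi_hsec (@eq B) 1).

Definition TCGk (G X : topologicalType) (act : G -> X -> X) (k : nat) :=
  secat (pi_hsec (same_orbit act) k).
Definition catGk (G X : topologicalType) (act : G -> X -> X) (x0 : X) (k : nat) :=
  secat (q_hsec (same_orbit act) x0 k).

Definition TCGinf (G X : topologicalType) (act : G -> X -> X) : option nat :=
  oinf [set n | exists k, (leq 1 k) /\ TCGk act k = Some n].
Definition catGinf (G X : topologicalType) (act : G -> X -> X) (x0 : X) :=
  oinf [set n | exists k, (leq 1 k) /\ catGk act x0 k = Some n].

From mathcomp Require Import all_boot all_order all_algebra.
From mathcomp Require Import all_classical all_reals topology.
From mathcomp Require Import normedtype Rstruct Rstruct_topology.
From mathcomp Require Import unstable lra.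
From Stdlib Require Import Rdefinitions.

Set Implicit Arguments.
Unset Strict Implicit.
Unset Printing Implicit Defensive.

Import Order.TTheory GRing.Theory Num.Theory.
Local Open Scope classical_set_scope.
Local Open Scope ring_scope.

(* Projecting by [rho] turns the orbit-gluing conditions of a multipath in [X]
   into equalities, so the projected paths concatenate into a single path of
   [X/G]; pulling an open cover back along [s] (resp. [s x s]) therefore bounds
   [cat(X/G)] (resp. [TC(X/G)]) by every [cat^{G,k}(X)] (resp. [TC^{G,k}(X)]).
   Conversely, [s] lifts a path of [X/G] and its homotopy to paths of [X] that
   start and end in the right orbits; framing them by constant paths (and, for
   [TC], by the reversed homotopy) gives a multipath of length 4 (resp. 5), so
   pulling covers back along [rho] gives the reverse inequalities. *)

Lemma within_continuous_precomp (T T' U : topologicalType) (A : set T)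
    (B : set T') (phi : T -> T') (g : T' -> U) :
  continuous phi -> (forall x, A x -> B (phi x)) ->
  {within B, continuous g} -> {within A, continuous (g \o phi)}.
Proof.
move=> cphi AB /subspace_continuousP cg; apply/subspace_continuousP => x Ax.
apply: cvg_comp (cg _ (AB _ Ax)) => P /(cphi x); rewrite !nbhs_simpl /=.
by apply: filterS => y Py /AB.
Qed.

(* Pasting lemma relative to [A]; unlike [withinU_continuous], [A] need not be closed. *)
Lemma within_continuous_closed_cover (T U : topologicalType) (A C1 C2 : set T)
    (f : T -> U) :
  closed C1 -> closed C2 -> A `<=` C1 `|` C2 ->
  {within A `&` C1, continuous f} -> {within A `&` C2, continuous f} ->
  {within A, continuous f}.
Proof.
move=> cC1 cC2 AC h1 h2; apply/subspace_continuousP => x Ax W Wx.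
have near_piece C : closed C -> {within A `&` C, continuous f} ->
    nbhs x (fun y => A y -> C y -> W (f y)).
  move=> cC /subspace_continuousP hC; have [Cx|nCx] := pselect (C x).
    move: (hC x (conj Ax Cx) W Wx); rewrite !nbhs_simpl /= /within /=.
    by apply: filterS => y Wy Ay Cy; exact: Wy.
  have : nbhs x (~` C) by apply: open_nbhs_nbhs; split=> //; exact: closed_openC.
  by apply: filterS => y nCy _ /nCy.
rewrite !nbhs_simpl /=.
apply: filterS (filterI (near_piece _ cC1 h1) (near_piece _ cC2 h2)).
by move=> y [W1 W2] Ay; case: (AC y Ay) => Cy; [exact: W1 | exact: W2].
Qed.

Lemma I01P (t : R) : I01 t <-> 0 <= t /\ t <= 1.
Proof. by split=> -[/RleP t0 /RleP t1]. Qed.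

Lemma continuous_fst (T U : topologicalType) : continuous (@fst T U).
Proof. by move=> x; exact: cvg_fst. Qed.

Lemma continuous_snd (T U : topologicalType) : continuous (@snd T U).
Proof. by move=> x; exact: cvg_snd. Qed.

Lemma continuous_pair (T U V : topologicalType) (f : T -> U) (g : T -> V) :
  continuous f -> continuous g -> continuous (fun x => (f x, g x)).
Proof. by move=> cf cg x; apply: cvg_pair; [exact: cf | exact: cg]. Qed.

Lemma cylinder_affine_continuous (Z : topologicalType) (a b : R) :
  continuous (fun z : Z * R => (z.1, a * z.2 + b)).
Proof.
have affine : continuous (fun t : R => a * t + b).
  by move=> t; apply: (@cvgD _ R^o); [exact: mulrl_continuous | exact: cvg_cst].
apply: continuous_pair; first exact: continuous_fst.
by move=> z; exact: (continuous_comp (@continuous_snd Z R z) (affine z.2)).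
Qed.

Definition path_family (Z Y : topologicalType) (U : set Z) (p : Z -> R -> Y) :=
  {within U `*` I01, continuous (fun z : Z * R => p z.1 z.2)}.

Section PathFamilies.
Variables (Z Y : topologicalType) (U : set Z).

Lemma path_family_cst (f : Z -> Y) :
  continuous f -> path_family U (fun z _ => f z).
Proof.
move=> cf; apply: continuous_subspaceT => z.
exact: (continuous_comp (@continuous_fst Z R z) (cf z.1)).
Qed.

Lemma path_family_comp (Z' Y' : topologicalType) (V : set Z') (p : Z -> R -> Y)
    (phi : Z' -> Z) (psi : Y -> Y') :
  path_family U p -> continuous phi -> (forall z, V z -> U (phi z)) ->
  continuous psi -> path_family V (fun z t => psi (p (phi z) t)).
Proof.
move=> cp cphi VU cpsi; apply: within_continuous_comp => [y _|]; first exact: cpsi.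
apply: (within_continuous_precomp (B := U `*` I01)
  (phi := fun z => (phi z.1, z.2))) cp.
- apply: continuous_pair; last exact: continuous_snd.
  by move=> z; exact: (continuous_comp (@continuous_fst Z' R z) (cphi z.1)).
- by move=> z [/VU Uz It].
Qed.

Lemma path_family_rev (p : Z -> R -> Y) :
  path_family U p -> path_family U (fun z t => p z (1 - t)).
Proof.
move=> cp; rewrite /path_family /=.
have -> : (fun z : Z * R => p z.1 (1 - z.2)) =
    (fun z : Z * R => p z.1 z.2) \o (fun z => (z.1, -1 * z.2 + 1)).
  by apply/funext => z /=; congr p; lra.
apply: (within_continuous_precomp (B := U `*` I01)) cp.
  exact: cylinder_affine_continuous.
by move=> z [Uz /I01P It]; split=> //=; apply/I01P; lra.
Qed.

Lemma mul2_half (K : numFieldType) : 2 * 2^-1 = 1 :> K.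
Proof. by rewrite mulfV // pnatr_eq0. Qed.

Definition path_cat (p q : Z -> R -> Y) (z : Z) (t : R) : Y :=
  if t <= 2^-1 then p z (2 * t) else q z (2 * t - 1).

Lemma path_cat0 (p q : Z -> R -> Y) z : path_cat p q z 0 = p z 0.
Proof. by rewrite /path_cat ifT ?mulr0 // invr_ge0 ler0n. Qed.

Lemma path_cat1 (p q : Z -> R -> Y) z : path_cat p q z 1 = q z 1.
Proof.
(* The numeral [1] at type [R] elaborates to Stdlib's [IZR 1], opaque to [lra]. *)
have half := mul2_half R; rewrite /path_cat (_ : IZR 1 = 1) // ifF.
  by congr q; lra.
by apply/negbTE; lra.
Qed.

Lemma path_family_cat (p q : Z -> R -> Y) :
  path_family U p -> path_family U q -> (forall z, U z -> p z 1 = q z 0) ->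
  path_family U (path_cat p q).
Proof.
move=> cp cq seam; have half := mul2_half R; rewrite /path_family.
have closed_snd := proj1 (continuous_closedP _) (@continuous_snd Z R).
apply: (@within_continuous_closed_cover _ _ _ [set z : Z * R | z.2 <= 2^-1]
  [set z | 2^-1 <= z.2]).
- exact: (closed_snd _ (@closed_le R _)).
- exact: (closed_snd _ (@closed_ge R _)).
- by move=> z _; case: (lerP z.2 2^-1) => h; [left | right; apply: ltW].
- apply: (subspace_eq_continuous (f := (fun z : Z * R => p z.1 z.2)
    \o (fun z => (z.1, 2 * z.2 + 0)))).
    by move=> z /set_mem [_ /= h]; rewrite /from_subspace /path_cat /= h addr0.
  apply: (within_continuous_precomp (B := U `*` I01)) cp.
    exact: cylinder_affine_continuous.
  by move=> z [[Uz /I01P It] /= h]; split=> //=; apply/I01P; lra.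
- apply: (subspace_eq_continuous (f := (fun z : Z * R => q z.1 z.2)
    \o (fun z => (z.1, 2 * z.2 - 1)))).
    move=> [z t] /set_mem [[/= Uz _] /= h]; rewrite /from_subspace /path_cat /=.
    case: ifP => // h'; have -> : t = 2^-1 by apply/eqP; rewrite eq_le h h'.
    by rewrite half subrr seam.
  apply: (within_continuous_precomp (B := U `*` I01)) cq.
    exact: cylinder_affine_continuous.
  by move=> z [[Uz /I01P It] /= h]; split=> //=; apply/I01P; lra.
Qed.

Lemma path_family_chain (k : nat) (p : nat -> Z -> R -> Y) : (0 < k)%nat ->
  (forall i, (i < k)%nat -> path_family U (p i)) ->
  (forall z, U z -> forall i, (i.+1 < k)%nat -> p i z 1 = p i.+1 z 0) ->
  exists P, [/\ path_family U P, forall z, U z -> P z 0 = p 0%nat z 0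
                            & forall z, U z -> P z 1 = p k.-1 z 1].
Proof.
elim: k p => [//|[|k] IH] p _ cp seam.
  by exists (p 0%nat); split=> //; exact: cp.
have [P [cP P0 P1]] := IH (fun i => p i.+1) erefl (fun i => cp i.+1)
  (fun z Uz i => seam z Uz i.+1).
exists (path_cat (p 0%nat) P); split=> [|z _|z Uz]; rewrite ?path_cat0 ?path_cat1 ?P1 //.
apply: path_family_cat => // [|z Uz]; first exact: cp.
by rewrite P0 //; exact: seam.
Qed.

End PathFamilies.

Lemma htpy_on_eq (Z Y : topologicalType) (U : set Z) (f g : Z -> Y) :
  continuous g -> (forall z, U z -> f z = g z) -> htpy_on U f g.
Proof.
move=> cg fg; exists (fun z _ => g z); split=> [|z Uz]; last by rewrite fg.
exact: path_family_cst.
Qed.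

Lemma htpy_on_comp (Z Z' Y Y' : topologicalType) (U : set Z) (V : set Z')
    (f g : Z -> Y) (f' g' : Z' -> Y') (phi : Z' -> Z) (psi : Y -> Y') :
  htpy_on U f g -> continuous phi -> (forall z, V z -> U (phi z)) ->
  continuous psi -> (forall z, V z -> f' z = psi (f (phi z))) ->
  (forall z, V z -> g' z = psi (g (phi z))) -> htpy_on V f' g'.
Proof.
move=> [H [cH H01]] cphi VU cpsi ff' gg'.
exists (fun z t => psi (H (phi z) t)); split.
  exact: path_family_comp cH cphi VU cpsi.
by move=> z Vz; have [H0 H1] := H01 _ (VU _ Vz); rewrite ff' ?gg' ?H0 ?H1.
Qed.

Lemma map_pair_continuous (T U : topologicalType) (f : T -> U) :
  continuous f -> continuous (map_pair f).
Proof.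
move=> cf; apply: continuous_pair => x.
  exact: (continuous_comp (@continuous_fst T T x) (cf x.1)).
exact: (continuous_comp (@continuous_snd T T x) (cf x.2)).
Qed.

Lemma secat_le_comap (B B' : topologicalType) (hsec : set B -> Prop)
    (hsec' : set B' -> Prop) (f : B' -> B) (n : nat) :
  continuous f -> (forall U, hsec U -> hsec' (f @^-1` U)) ->
  secat_le hsec n -> secat_le hsec' n.
Proof.
move=> cf hsecf [U [oU [covU hU]]]; exists (fun i => f @^-1` U i).
split; [|split].
- by move=> i; exact: (proj1 (continuousP f) cf _ (oU i)).
- by move=> b; have [i Ui] := covU (f b); exists i.
- by move=> i; exact: hsecf.
Qed.

Lemma oinf_someE (S : set nat) n :
  oinf S = Some n -> S n /\ forall m, S m -> (n <= m)%nat.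
Proof.
rewrite /oinf; case: pselect => // h [<-].
case: ex_minnP => m /asboolP Sm hm; split => // k Sk; apply: hm; exact/asboolP.
Qed.

Lemma oinf_noneE (S : set nat) : oinf S = None -> forall n, ~ S n.
Proof. by rewrite /oinf; case: pselect => // h _ n Sn; apply: h; exists n. Qed.

Lemma oinf_le (S : set nat) n : S n -> exists2 m, oinf S = Some m & (m <= n)%nat.
Proof.
move=> Sn; case E : (oinf S) => [m|]; last by case: (oinf_noneE E Sn).
by exists m => //; apply: (oinf_someE E).2.
Qed.

Lemma oinf_eq_cofinal (S T : set nat) :
  (forall n, S n -> exists2 m, T m & (m <= n)%nat) ->
  (forall n, T n -> exists2 m, S m & (m <= n)%nat) -> oinf S = oinf T.
Proof.
move=> ST TS; case ES: (oinf S) => [n|]; case ET: (oinf T) => [m|].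
- have [[Sn nmin] [Tm mmin]] := (oinf_someE ES, oinf_someE ET).
  have [[m' Tm' m'n] [n' Sn' n'm]] := (ST _ Sn, TS _ Tm).
  congr Some; apply/eqP.
  by rewrite eqn_leq (leq_trans (nmin _ Sn') n'm) (leq_trans (mmin _ Tm') m'n).
- by have [/ST [m Tm _] _] := oinf_someE ES; case: (oinf_noneE ET Tm).
- by have [/TS [n Sn _] _] := oinf_someE ET; case: (oinf_noneE ES Sn).
- by [].
Qed.

Lemma oinf_oinf_family (P : nat -> set nat) (S : set nat) (k0 : nat) :
  (0 < k0)%nat -> (forall k, (0 < k)%nat -> P k `<=` S) -> S `<=` P k0 ->
  oinf [set n | exists k, (0 < k)%nat /\ oinf (P k) = Some n] = oinf S.
Proof.
move=> k0_gt0 PS SP; apply: oinf_eq_cofinal => n.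
  by move=> [k [k_gt0 /oinf_someE [Pkn _]]]; exists n => //; exact: PS Pkn.
by move=> /SP /oinf_le [m Pm mn]; exists m => //; exists k0.
Qed.

Section StrictSection.
Variables (X Q : topologicalType) (rel : X -> X -> Prop) (rho : X -> Q) (s : Q -> X).
Hypotheses (rho_cont : continuous rho) (s_cont : continuous s) (rhoK : cancel s rho).
Hypothesis rho_eqE : forall x y, rho x = rho y <-> rel x y.

Lemma q_hsec_descend (x0 : X) (k : nat) (U : set X) : (0 < k)%nat ->
  q_hsec rel x0 k U -> q_hsec (@eq Q) (rho x0) 1 (s @^-1` U).
Proof.
move=> k_gt0 [gam [[cgam glue] [gam0 hH]]].
have [P [cP P0 P1]] := path_family_chain (U := s @^-1` U)
  (p := fun i q t => rho (gam i (s q) t)) k_gt0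
  (fun i ik => path_family_comp (cgam i ik) s_cont (fun _ Uq => Uq) rho_cont)
  (fun q Uq i ik => proj2 (rho_eqE _ _) (glue _ Uq i ik)).
exists (fun _ => P); split; [by split | split].
  by move=> q Uq; rewrite P0 // gam0.
apply: htpy_on_comp hH s_cont (fun _ Uq => Uq) rho_cont _ _ => q Uq //.
exact: P1.
Qed.

Lemma q_hsec_lift (x0 : X) (U : set Q) :
  q_hsec (@eq Q) (rho x0) 1 U -> q_hsec rel x0 4 (rho @^-1` U).
Proof.
move=> [gam [[cgam _] [gam0 [H [cH H01]]]]].
exists (fun j x t => match j with
  | 0 => x0 | 1 => s (gam 0%nat (rho x) t) | 2 => s (H (rho x) t) | _ => x end).
split; [split|split].
- case=> [|[|[|j]]] _.
  + exact/path_family_cst/cst_continuous.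
  + exact: path_family_comp (cgam 0%nat erefl) rho_cont _ s_cont.
  + exact: path_family_comp cH rho_cont _ s_cont.
  + by apply: (path_family_cst (f := id)) => x; exact: cvg_id.
- move=> x Ux [|[|[|j]]] // _; apply/rho_eqE; rewrite !rhoK.
  + by rewrite gam0.
  + by rewrite (H01 _ Ux).1.
  + by rewrite (H01 _ Ux).2.
- by [].
- by apply: htpy_on_eq => // x; exact: cvg_id.
Qed.

Lemma pi_hsec_descend (k : nat) (U : set (X * X)) : (0 < k)%nat ->
  pi_hsec rel k U -> pi_hsec (@eq Q) 1 (map_pair s @^-1` U).
Proof.
move=> k_gt0 [gam [[cgam glue] hH]].
have s2_cont := map_pair_continuous s_cont.
have [P [cP P0 P1]] := path_family_chain (U := map_pair s @^-1` U)
  (p := fun i q t => rho (gam i (map_pair s q) t)) k_gt0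
  (fun i ik => path_family_comp (cgam i ik) s2_cont (fun _ Uq => Uq) rho_cont)
  (fun q Uq i ik => proj2 (rho_eqE _ _) (glue _ Uq i ik)).
exists (fun _ => P); split; first by split.
apply: htpy_on_comp hH s2_cont (fun _ Uq => Uq) (map_pair_continuous rho_cont) _ _.
  by move=> q Uq; rewrite P0 // P1.
by move=> [q1 q2] _; rewrite /map_pair /= !rhoK.
Qed.

Lemma pi_hsec_lift (U : set (Q * Q)) :
  pi_hsec (@eq Q) 1 U -> pi_hsec rel 5 (map_pair rho @^-1` U).
Proof.
move=> [gam [[cgam _] [H [cH H01]]]].
have rho2_cont := map_pair_continuous rho_cont.
exists (fun j x t => match j with
  | 0 => x.1 | 1 => s (H (map_pair rho x) (1 - t)).1
  | 2 => s (gam 0%nat (map_pair rho x) t)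
  | 3 => s (H (map_pair rho x) t).2 | _ => x.2 end).
split; [split|].
- case=> [|[|[|[|j]]]] _.
  + exact/path_family_cst/continuous_fst.
  + apply: (path_family_rev (p := fun x t => s (H (map_pair rho x) t).1)).
    apply: (path_family_comp (psi := s \o fst) cH rho2_cont) => // y.
    by apply: continuous_comp; [exact: continuous_fst | exact: s_cont].
  + exact: path_family_comp (cgam 0%nat erefl) rho2_cont _ s_cont.
  + apply: (path_family_comp (psi := s \o snd) cH rho2_cont) => // y.
    by apply: continuous_comp; [exact: continuous_snd | exact: s_cont].
  + exact/path_family_cst/continuous_snd.
- move=> x Ux [|[|[|[|j]]]] // _; apply/rho_eqE; rewrite ?subr0 ?subrr.
  + by rewrite (H01 _ Ux).2 rhoK.
  + by rewrite (H01 _ Ux).1.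
  + by rewrite (H01 _ Ux).1.
  + by rewrite (H01 _ Ux).2 rhoK.
- by apply: (htpy_on_eq (g := id)) => [x|[]//]; exact: cvg_id.
Qed.

End StrictSection.

Theorem mainTheorem8 (G X Q : topologicalType)
    (mul : G -> G -> G) (inv : G -> G) (one : G) (act : G -> X -> X)
    (x0 : X) (rho : X -> Q) (s : Q -> X) :
  is_top_group_action mul inv one act ->
  is_orbit_map act rho ->
  continuous s -> (forall q, rho (s q) = q) ->
  catGinf act x0 = catLS (rho x0) /\ TCGinf act = TC Q.
Proof.
move=> _ [_ rho_eqE rho_open] s_cont rhoK.
have rho_cont : continuous rho by apply/continuousP => V /rho_open.
have s2_cont := map_pair_continuous s_cont.
have rho2_cont := map_pair_continuous rho_cont.
rewrite /catGinf /catGk /catLS /TCGinf /TCGk /TC /secat; split.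
- apply: (oinf_oinf_family (k0 := 4)) => // [k k_gt0|] n.
    by apply: (secat_le_comap s_cont) => U; exact: q_hsec_descend.
  by apply: (secat_le_comap rho_cont) => U; exact: q_hsec_lift.
- apply: (oinf_oinf_family (k0 := 5)) => // [k k_gt0|] n.
    by apply: (secat_le_comap s2_cont) => U; exact: pi_hsec_descend.
  by apply: (secat_le_comap rho2_cont) => U; exact: pi_hsec_lift.
Qed.
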